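(* Let $N, D_1, D_2$ be positive integers. Let $f^{[n]}_{\mathrm{DINOv2}}$ ($n=1,\dots,N$) map images to $\mathbb{R}^{D_1}$ (patch features of a pretrained DINOv2 encoder), let $\mathrm{DiffEnc}^{[n]}$ ($n=1,\dots,N$) map images to $\mathbb{R}^{D_2}$ (the $n$-th patch token of a diffusion model's hidden representation at timestep $t=0$), and let $g_\phi:\mathbb{R}^{D_2}\to\mathbb{R}^{D_1}$ be a projection head. Assume all feature embeddings in the DINOv2 embedding space are $\ell_2$-normalized, i.e. $\|f^{[n]}_{\mathrm{DINOv2}}(u)\|_2 = 1$ and $\|g_\phi(\mathrm{DiffEnc}^{[n]}(u))\|_2=1$ for all images $u$ and all $n$. Let $x\sim p_X$ be a ground-truth image, $\hat x \sim p_{\hat X\mid Y}$ its reconstruction produced by any reconstruction method (with marginal law $p_{\hat X}$), and $\bar x\sim p_{\bar X}$ a proxy approximation of $x$, all random variables on a common probability space. Define $$\mathrm{REPA}(\bar x,\hat x)=\frac1N\sum_{n=1}^N \cos\!\Big(f^{[n]}_{\mathrm{DINOv2}}(\bar x),\, g_\phi\big(\mathrm{DiffEnc}^{[n]}(\hat x)\big)\Big),\qquad \mu_f(u)=\frac1N\sum_{n=1}^N f^{[n]}_{\mathrm{DINOv2}}(u),$$ $$\mathrm{ApproxErr}(x,\bar x)=\frac1N\sum_{n=1}^N\big\|f^{[n]}_{\mathrm{DINOv2}}(x)-f^{[n]}_{\mathrm{DINOv2}}(\bar x)\big\|_2^2,\qquad \mathrm{MisREPA}(u)=\frac1N\sum_{n=1}^N\big\|f^{[n]}_{\mathrm{DINOv2}}(u)-g_\phi\big(\mathrm{DiffEnc}^{[n]}(u)\big)\big\|_2^2,$$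 and $\mathrm{MMD}_{\mathrm{DINOv2}}(p_X,p_{\hat X})=\big\|\mathbb{E}_x[\mu_f(x)]-\mathbb{E}_{\hat x}[\mu_f(\hat x)]\big\|_2^2$. Then $$\mathbb{E}_{\hat x,\bar x}\big[\mathrm{REPA}(\bar x,\hat x)\big]\le 1-\frac18\,\mathrm{MMD}_{\mathrm{DINOv2}}(p_X,p_{\hat X})+\frac12\,\mathbb{E}_{x,\bar x}\big[\mathrm{ApproxErr}(x,\bar x)\big]+\frac14\,\mathbb{E}_{\hat x}\big[\mathrm{MisREPA}(\hat x)\big].$$
   Context: $\cos(a,b)=\langle a,b\rangle/(\|a\|_2\|b\|_2)$. Images are elements of a fixed Euclidean space; $f_{\mathrm{DINOv2}}$, $\mathrm{DiffEnc}$, $g_\phi$ are fixed measurable maps, and all expectations are assumed finite (they are, since all features considered are unit vectors or bounded). The expectations are taken under the joint law of $(x,\bar x,\hat x)$. *)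

From HB Require Import structures.
From mathcomp Require Import all_boot all_order all_algebra.
From mathcomp Require Import all_classical all_reals all_analysis.
Set Implicit Arguments. Unset Strict Implicit. Unset Printing Implicit Defensive.
Import Order.TTheory GRing.Theory Num.Theory.
Local Open Scope ring_scope.

Definition dotv {R : realType} {D : nat} (a b : 'rV[R]_D) : R :=
  \sum_(i < D) a 0 i * b 0 i.
Definition norm2 {R : realType} {D : nat} (a : 'rV[R]_D) : R :=
  Num.sqrt (dotv a a).
Definition cosv {R : realType} {D : nat} (a b : 'rV[R]_D) : R :=
  dotv a b / (norm2 a * norm2 b).

Definition Ex {d} {Omega : measurableType d} {R : realType}
  (P : probability Omega R) (X : Omega -> R) : R := Rintegral P setT X.

Definition Exv {d} {Omega : measurableType d} {R : realType} {D : nat}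
  (P : probability Omega R) (X : Omega -> 'rV[R]_D) : 'rV[R]_D :=
  \row_(i < D) Ex P (fun w => X w 0 i).

Section Quantities.
Context {R : realType} {Img : Type} {N D1 D2 : nat}
  (f : 'I_N -> Img -> 'rV[R]_D1) (Enc : 'I_N -> Img -> 'rV[R]_D2)
  (g : 'rV[R]_D2 -> 'rV[R]_D1).

Definition REPA (xb xh : Img) : R :=
  N%:R^-1 * \sum_(n < N) cosv (f n xb) (g (Enc n xh)).
Definition mu_f (u : Img) : 'rV[R]_D1 :=
  N%:R^-1 *: \sum_(n < N) f n u.
Definition ApproxErr (x xb : Img) : R :=
  N%:R^-1 * \sum_(n < N) norm2 (f n x - f n xb) ^+ 2.
Definition MisREPA (u : Img) : R :=
  N%:R^-1 * \sum_(n < N) norm2 (f n u - g (Enc n u)) ^+ 2.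
End Quantities.

Definition MMD_DINOv2 {d} {Omega : measurableType d} {R : realType}
  {Img : Type} {N D1 : nat} (P : probability Omega R)
  (f : 'I_N -> Img -> 'rV[R]_D1) (x xh : Omega -> Img) : R :=
  norm2 (Exv P (fun w => mu_f f (x w)) - Exv P (fun w => mu_f f (xh w))) ^+ 2.

From HB Require Import structures.
From mathcomp Require Import all_boot all_order all_algebra.
From mathcomp Require Import all_classical all_reals all_analysis.
From mathcomp Require Import ring lra measurable_realfun.
Import Order.TTheory GRing.Theory Num.Theory.
Local Open Scope ring_scope.
Local Open Scope classical_set_scope.

(** For unit vectors [a = f(xbar)], [b = g(Enc(xhat))] and any [c = f(xhat)],
    [e = f(x)], split [e - c = (e - a) + (a - b) + (b - c)].  The weighted
    Cauchy-Schwarz bound [|u + v + w|^2 <= 4|u|^2 + 4|v|^2 + 2|w|^2] and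
    [|a - b|^2 = 2 - 2<a, b>] give, patch by patch,
    [<a, b> <= 1 - |e - c|^2/8 + |e - a|^2/2 + |c - b|^2/4].  Averaging over
    patches and taking expectations leaves the term [E[ApproxErr(x, xhat)]],
    which dominates the MMD by Jensen's inequality applied twice: the squared
    norm of a mean (over patches, then over the probability space) is at most
    the mean of the squared norms. *)

Section BoundedExpectation.
Context {R : realType} {d : measure_display} {Omega : measurableType d}
  (P : probability Omega R).

(* Boundedness rather than integrability, so that squares stay integrable. *)
Definition bounded_rv (X : Omega -> R) :=
  measurable_fun setT X /\ exists M, forall w, `|X w| <= M.

Lemma bounded_rv_cst c : bounded_rv (fun _ => c).
Proof. by split; [exact: measurable_cst | exists `|c|]. Qed.

Lemma bounded_rvD {X Y} :
  bounded_rv X -> bounded_rv Y -> bounded_rv (fun w => X w + Y w).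
Proof.
move=> [mX [M hM]] [mY [M' hM']]; split; first exact: measurable_funD.
by exists (M + M') => w; rewrite (le_trans (ler_normD _ _)) ?lerD.
Qed.

Lemma bounded_rvM {X Y} :
  bounded_rv X -> bounded_rv Y -> bounded_rv (fun w => X w * Y w).
Proof.
move=> [mX [M hM]] [mY [M' hM']]; split; first exact: measurable_funM.
by exists (M * M') => w; rewrite normrM ler_pM.
Qed.

Lemma bounded_rvZ c {X} : bounded_rv X -> bounded_rv (fun w => c * X w).
Proof. exact/bounded_rvM/bounded_rv_cst. Qed.

Lemma bounded_rvB {X Y} :
  bounded_rv X -> bounded_rv Y -> bounded_rv (fun w => X w - Y w).
Proof.
move=> bX /(bounded_rvZ (-1)) bNY.
have -> : (fun w => X w - Y w) = (fun w => X w + -1 * Y w).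
  by apply/funext => w; rewrite mulN1r.
exact: bounded_rvD.
Qed.

Lemma bounded_rv_sum (I : Type) (s : seq I) (X : I -> Omega -> R) :
  (forall i, bounded_rv (X i)) -> bounded_rv (fun w => \sum_(i <- s) X i w).
Proof.
move=> bX; elim: s => [|i s IH].
  by under [fun w => _]funext do rewrite big_nil; exact: bounded_rv_cst.
by under [fun w => _]funext do rewrite big_cons; exact: bounded_rvD.
Qed.

Lemma bounded_rv_integrable X : bounded_rv X -> P.-integrable setT (EFin \o X).
Proof.
move=> [mX [M hM]]; apply: measurable_bounded_integrable => //.
  exact: le_lt_trans (probability_le1 _ _) (ltry _).
exists M; split; first exact: num_real.
by move=> M' ltMM' w _; rewrite /= (le_trans (hM w)) ?ltW.
Qed.

Lemma ExD X Y : bounded_rv X -> bounded_rv Y ->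
  Ex P (fun w => X w + Y w) = Ex P X + Ex P Y.
Proof.
by move=> bX bY; rewrite /Ex RintegralD //; exact: bounded_rv_integrable.
Qed.

Lemma ExB X Y : bounded_rv X -> bounded_rv Y ->
  Ex P (fun w => X w - Y w) = Ex P X - Ex P Y.
Proof.
by move=> bX bY; rewrite /Ex RintegralB //; exact: bounded_rv_integrable.
Qed.

Lemma ExZl c X : bounded_rv X -> Ex P (fun w => c * X w) = c * Ex P X.
Proof. by move=> bX; rewrite /Ex RintegralZl //; exact: bounded_rv_integrable. Qed.

Lemma Ex_cst c : Ex P (fun _ => c) = c.
Proof.
rewrite /Ex Rintegral_cst // -[RHS]mulr1; congr (_ * _).
by rewrite -[1]/(fine 1%E); congr fine; exact: probability_setT.
Qed.

Lemma le_Ex {X Y} : bounded_rv X -> bounded_rv Y -> (forall w, X w <= Y w) ->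
  Ex P X <= Ex P Y.
Proof.
by move=> bX bY XY; rewrite /Ex le_Rintegral //; exact: bounded_rv_integrable.
Qed.

Lemma Ex_ge0 X : (forall w, 0 <= X w) -> 0 <= Ex P X.
Proof. by move=> X0; apply: Rintegral_ge0. Qed.

Lemma Ex_sum (I : Type) (s : seq I) (X : I -> Omega -> R) :
  (forall i, bounded_rv (X i)) ->
  Ex P (fun w => \sum_(i <- s) X i w) = \sum_(i <- s) Ex P (X i).
Proof.
move=> bX; elim: s => [|i s IH].
  by under [fun w => _]funext do rewrite big_nil; rewrite big_nil Ex_cst.
under [fun w => _]funext do rewrite big_cons.
by rewrite ExD ?big_cons ?IH //; exact: bounded_rv_sum.
Qed.

Lemma le_Ex_affine {c a b e X S A M} :
  bounded_rv X -> bounded_rv S -> bounded_rv A -> bounded_rv M ->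
  (forall w, X w <= c - a * S w + b * A w + e * M w) ->
  Ex P X <= c - a * Ex P S + b * Ex P A + e * Ex P M.
Proof.
move=> bX bS bA bM XB.
have baS := bounded_rvZ a bS; have bbA := bounded_rvZ b bA.
have beM := bounded_rvZ e bM; have bc := bounded_rv_cst c.
have bcS := bounded_rvB bc baS; have bcSA := bounded_rvD bcS bbA.
apply: (le_trans (le_Ex bX (bounded_rvD bcSA beM) XB)).
by rewrite ExD // ExD // ExB // !ExZl // Ex_cst.
Qed.

Lemma sqr_Ex_le X : bounded_rv X -> Ex P X ^+ 2 <= Ex P (fun w => X w ^+ 2).
Proof.
move=> bX; set m := Ex P X.
have bX2 : bounded_rv (fun w => X w ^+ 2) by exact: bounded_rvM.
have bmX := bounded_rvZ (-2 * m) bX; have bm2 := bounded_rv_cst (m ^+ 2).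
have : 0 <= Ex P (fun w => (X w - m) ^+ 2) by apply: Ex_ge0 => w; exact: sqr_ge0.
have -> : (fun w => (X w - m) ^+ 2)
    = (fun w => X w ^+ 2 + (-2 * m * X w + m ^+ 2)).
  by apply/funext => w; ring.
rewrite ExD //; last exact: bounded_rvD.
by rewrite ExD // ExZl // Ex_cst -/m expr2; lra.
Qed.

End BoundedExpectation.

Section Scalar.
Context {R : realFieldType}.

Lemma sqr_add3_le (u v w : R) :
  (u + v + w) ^+ 2 <= 4 * u ^+ 2 + 4 * v ^+ 2 + 2 * w ^+ 2.
Proof.
rewrite -subr_ge0.
have -> : 4 * u ^+ 2 + 4 * v ^+ 2 + 2 * w ^+ 2 - (u + v + w) ^+ 2
    = 2 * (u - v) ^+ 2 + (u + v - w) ^+ 2 by ring.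
by apply: addr_ge0; [apply: mulr_ge0|]; rewrite ?sqr_ge0.
Qed.

Lemma sqr_mean_le (N : nat) (y : 'I_N -> R) :
  (N%:R^-1 * \sum_(n < N) y n) ^+ 2 <= N%:R^-1 * \sum_(n < N) y n ^+ 2.
Proof.
case: N y => [y|k y]; first by rewrite !big_ord0 mulr0 expr0n.
have Npos : 0 < k.+1%:R :> R by rewrite ltr0n.
set m := _^-1 * _.
have sum_m : \sum_n y n = k.+1%:R * m by rewrite mulrA mulfV ?mul1r ?gt_eqF.
have : 0 <= \sum_n (y n - m) ^+ 2 by apply: sumr_ge0 => n _; exact: sqr_ge0.
rewrite (eq_bigr (fun n => y n ^+ 2 + (-2 * m) * y n + m ^+ 2)); last first.
  by move=> n _; ring.
rewrite !big_split /= -mulr_sumr sum_m sumr_const card_ord -mulr_natl.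
by rewrite ler_pdivlMl //; nra.
Qed.

End Scalar.

Section EuclideanNorm.
Context {R : realType} {D : nat}.
Implicit Types a b c e u v w : 'rV[R]_D.

Lemma dotvv_ge0 v : 0 <= dotv v v.
Proof. by apply: sumr_ge0 => i _; rewrite -expr2 sqr_ge0. Qed.

Lemma sqr_norm2 v : norm2 v ^+ 2 = \sum_(i < D) v 0 i ^+ 2.
Proof.
by rewrite sqr_sqrtr ?dotvv_ge0 //; apply: eq_bigr => i _; rewrite expr2.
Qed.

Lemma normr_coord_le_norm2 v i : `|v 0 i| <= norm2 v.
Proof.
rewrite -sqrtr_sqr; apply: ler_wsqrtr; rewrite /dotv (bigD1 i) //= -expr2 lerDl.
by apply: sumr_ge0 => j _; rewrite -expr2 sqr_ge0.
Qed.

Lemma norm2N v : norm2 (- v) = norm2 v.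
Proof. by rewrite /norm2 /dotv; under eq_bigr do rewrite mxE mulrNN. Qed.

Lemma sqr_norm2B a b :
  norm2 (a - b) ^+ 2 = norm2 a ^+ 2 + norm2 b ^+ 2 - 2 * dotv a b.
Proof.
rewrite !sqr_norm2 /dotv mulr_sumr -big_split -sumrB /=.
by apply: eq_bigr => i _; rewrite !mxE; ring.
Qed.

Lemma sqr_norm2_add3_le u v w :
  norm2 (u + v + w) ^+ 2
  <= 4 * norm2 u ^+ 2 + 4 * norm2 v ^+ 2 + 2 * norm2 w ^+ 2.
Proof.
rewrite !sqr_norm2 !mulr_sumr -!big_split /=.
by apply: ler_sum => i _; rewrite !mxE; exact: sqr_add3_le.
Qed.

Lemma sqr_norm2_mean_le (N : nat) (v : 'I_N -> 'rV[R]_D) :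
  norm2 (N%:R^-1 *: \sum_(n < N) v n) ^+ 2
  <= N%:R^-1 * \sum_(n < N) norm2 (v n) ^+ 2.
Proof.
under [X in _ <= _ * X]eq_bigr do rewrite sqr_norm2.
rewrite sqr_norm2 exchange_big mulr_sumr /=.
apply: ler_sum => i _; rewrite !mxE summxE.
exact: sqr_mean_le.
Qed.

Lemma cosv_unit a b : norm2 a = 1 -> norm2 b = 1 -> cosv a b = dotv a b.
Proof. by move=> a1 b1; rewrite /cosv a1 b1 mulr1 invr1 mulr1. Qed.

Lemma dotv_unit_le a b c e : norm2 a = 1 -> norm2 b = 1 ->
  dotv a b <= 1 - 8^-1 * norm2 (e - c) ^+ 2
              + 2^-1 * norm2 (e - a) ^+ 2 + 4^-1 * norm2 (c - b) ^+ 2.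
Proof.
move=> a1 b1.
have := sqr_norm2_add3_le (e - a) (a - b) (b - c).
have -> : e - a + (a - b) + (b - c) = e - c by rewrite !addrA subrK subrK.
by rewrite (sqr_norm2B a b) a1 b1 -(norm2N (b - c)) opprB; lra.
Qed.

End EuclideanNorm.

Section VectorExpectation.
Context {R : realType} {d : measure_display} {Omega : measurableType d}
  (P : probability Omega R) {D : nat}.
Implicit Types X Y : Omega -> 'rV[R]_D.

Definition bounded_rvec X := forall i, bounded_rv (fun w => X w 0 i).

Lemma bounded_rvec_norm2 {X} M :
  (forall i, measurable_fun setT (fun w => X w 0 i)) ->
  (forall w, norm2 (X w) <= M) -> bounded_rvec X.
Proof.
move=> mX XM i; split=> //; exists M => w.
exact: le_trans (normr_coord_le_norm2 _ _) (XM w).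
Qed.

Lemma bounded_rvecB {X Y} :
  bounded_rvec X -> bounded_rvec Y -> bounded_rvec (fun w => X w - Y w).
Proof.
move=> bX bY i; under [fun w => _]funext do rewrite !mxE.
exact: bounded_rvB.
Qed.

Lemma bounded_rvecZ c {X} : bounded_rvec X -> bounded_rvec (fun w => c *: X w).
Proof.
move=> bX i; under [fun w => _]funext do rewrite !mxE.
exact: bounded_rvZ.
Qed.

Lemma bounded_rvec_sum (I : Type) (s : seq I) (X : I -> Omega -> 'rV[R]_D) :
  (forall i, bounded_rvec (X i)) -> bounded_rvec (fun w => \sum_(i <- s) X i w).
Proof.
move=> bX j; under [fun w => _]funext do rewrite summxE.
by apply: bounded_rv_sum => i; exact: bX.
Qed.

Lemma bounded_rv_dotv {X Y} :
  bounded_rvec X -> bounded_rvec Y -> bounded_rv (fun w => dotv (X w) (Y w)).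
Proof. by move=> bX bY; apply: bounded_rv_sum => i; exact: bounded_rvM. Qed.

Lemma bounded_rv_sqr_norm2 {X} :
  bounded_rvec X -> bounded_rv (fun w => norm2 (X w) ^+ 2).
Proof.
move=> bX; under [fun w => _]funext do rewrite sqr_norm2.
by apply: bounded_rv_sum => i; exact: bounded_rvM.
Qed.

Lemma ExvB {X Y} : bounded_rvec X -> bounded_rvec Y ->
  Exv P X - Exv P Y = Exv P (fun w => X w - Y w).
Proof.
move=> bX bY; apply/rowP => i; rewrite !mxE -ExB //.
by congr (Ex P _); apply/funext => w; rewrite !mxE.
Qed.

Lemma sqr_norm2_Exv_le {X} : bounded_rvec X ->
  norm2 (Exv P X) ^+ 2 <= Ex P (fun w => norm2 (X w) ^+ 2).
Proof.
move=> bX; under [fun w => _]funext do rewrite sqr_norm2.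
rewrite sqr_norm2 Ex_sum; last by move=> i; exact: bounded_rvM.
by apply: ler_sum => i _; rewrite mxE; exact: sqr_Ex_le.
Qed.

End VectorExpectation.

Section Features.
Context {R : realType} {Img : Type} {N D1 D2 : nat}
  (f : 'I_N -> Img -> 'rV[R]_D1) (Enc : 'I_N -> Img -> 'rV[R]_D2)
  (g : 'rV[R]_D2 -> 'rV[R]_D1).

Lemma REPA_le x xb xh : (0 < N)%N ->
  (forall n u, norm2 (f n u) = 1) -> (forall n u, norm2 (g (Enc n u)) = 1) ->
  REPA f Enc g xb xh
  <= 1 - 8^-1 * ApproxErr f x xh + 2^-1 * ApproxErr f x xb
       + 4^-1 * MisREPA f Enc g xh.
Proof.
move=> N_gt0 f_unit gEnc_unit.
have mean1 : N%:R^-1 * \sum_(n < N) 1 = 1 :> R.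
  by rewrite sumr_const card_ord mulVf // pnatr_eq0 -lt0n.
rewrite -[X in _ <= X - _ + _ + _]mean1.
rewrite /REPA /ApproxErr /MisREPA !(mulrCA _ N%:R^-1) -mulrBr -!mulrDr.
rewrite !mulr_sumr -sumrB -!big_split -mulr_sumr /=.
apply: ler_wpM2l; first by rewrite invr_ge0.
apply: ler_sum => n _; rewrite cosv_unit //.
exact: dotv_unit_le.
Qed.

Lemma mu_fB u v : mu_f f u - mu_f f v = N%:R^-1 *: \sum_(n < N) (f n u - f n v).
Proof. by rewrite /mu_f -scalerBr sumrB. Qed.

Lemma sqr_norm2_mu_fB_le u v : norm2 (mu_f f u - mu_f f v) ^+ 2 <= ApproxErr f u v.
Proof. by rewrite mu_fB; exact: sqr_norm2_mean_le. Qed.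

End Features.

Section RandomFeatures.
Context {R : realType} {d : measure_display} {Omega : measurableType d}
  (P : probability Omega R) {Img : Type} {N D1 D2 : nat}
  (f : 'I_N -> Img -> 'rV[R]_D1) (Enc : 'I_N -> Img -> 'rV[R]_D2)
  (g : 'rV[R]_D2 -> 'rV[R]_D1).
Implicit Types y z : Omega -> Img.

Lemma bounded_rv_ApproxErr {y z} :
  (forall n, bounded_rvec (fun w => f n (y w))) ->
  (forall n, bounded_rvec (fun w => f n (z w))) ->
  bounded_rv (fun w => ApproxErr f (y w) (z w)).
Proof.
move=> by_ bz; apply: bounded_rvZ; apply: bounded_rv_sum => n.
by apply: bounded_rv_sqr_norm2; exact: bounded_rvecB.
Qed.

Lemma bounded_rv_MisREPA {z} :
  (forall n, bounded_rvec (fun w => f n (z w))) ->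
  (forall n, bounded_rvec (fun w => g (Enc n (z w)))) ->
  bounded_rv (fun w => MisREPA f Enc g (z w)).
Proof.
move=> bf bg; apply: bounded_rvZ; apply: bounded_rv_sum => n.
by apply: bounded_rv_sqr_norm2; exact: bounded_rvecB.
Qed.

Lemma bounded_rvec_mu_f {y} :
  (forall n, bounded_rvec (fun w => f n (y w))) ->
  bounded_rvec (fun w => mu_f f (y w)).
Proof. by move=> by_; apply: bounded_rvecZ; exact: bounded_rvec_sum. Qed.

Lemma bounded_rv_REPA {y z} :
  (forall n u, norm2 (f n u) = 1) -> (forall n u, norm2 (g (Enc n u)) = 1) ->
  (forall n, bounded_rvec (fun w => f n (y w))) ->
  (forall n, bounded_rvec (fun w => g (Enc n (z w)))) ->
  bounded_rv (fun w => REPA f Enc g (y w) (z w)).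
Proof.
move=> f_unit gEnc_unit bf bg; rewrite /REPA.
under [fun w => _]funext do under eq_bigr do rewrite cosv_unit //.
by apply: bounded_rvZ; apply: bounded_rv_sum => n; exact: bounded_rv_dotv.
Qed.

Lemma MMD_DINOv2_le_Ex_ApproxErr {y z} :
  (forall n, bounded_rvec (fun w => f n (y w))) ->
  (forall n, bounded_rvec (fun w => f n (z w))) ->
  MMD_DINOv2 P f y z <= Ex P (fun w => ApproxErr f (y w) (z w)).
Proof.
move=> by_ bz.
have [bmu_y bmu_z] := (bounded_rvec_mu_f by_, bounded_rvec_mu_f bz).
rewrite /MMD_DINOv2 ExvB //.
have bdiff := bounded_rvecB bmu_y bmu_z.
apply: le_trans (sqr_norm2_Exv_le P bdiff) _.
apply: le_Ex; [exact: bounded_rv_sqr_norm2 | exact: bounded_rv_ApproxErr |].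
by move=> w; exact: sqr_norm2_mu_fB_le.
Qed.

End RandomFeatures.

Theorem proposition1 (R : realType) (N D1 D2 : nat)
  (hN : (0 < N)%N) (hD1 : (0 < D1)%N) (hD2 : (0 < D2)%N)
  (dI : measure_display) (Img : measurableType dI)
  (f : 'I_N -> Img -> 'rV[R]_D1) (Enc : 'I_N -> Img -> 'rV[R]_D2)
  (g : 'rV[R]_D2 -> 'rV[R]_D1)
  (f_meas : forall n i, measurable_fun setT (fun u => f n u 0 i))
  (gEnc_meas : forall n i, measurable_fun setT (fun u => g (Enc n u) 0 i))
  (f_unit : forall n u, norm2 (f n u) = 1)
  (gEnc_unit : forall n u, norm2 (g (Enc n u)) = 1)
  (d : measure_display) (Omega : measurableType d) (P : probability Omega R)
  (x xbar xhat : Omega -> Img)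
  (x_meas : measurable_fun setT x) (xbar_meas : measurable_fun setT xbar)
  (xhat_meas : measurable_fun setT xhat) :
  Ex P (fun w => REPA f Enc g (xbar w) (xhat w))
  <= 1 - 8^-1 * MMD_DINOv2 P f x xhat
       + 2^-1 * Ex P (fun w => ApproxErr f (x w) (xbar w))
       + 4^-1 * Ex P (fun w => MisREPA f Enc g (xhat w)).
Proof.
have bf (y : Omega -> Img) :
    measurable_fun setT y -> forall n, bounded_rvec (fun w => f n (y w)).
  move=> my n; apply: (bounded_rvec_norm2 1) => [i|w].
    exact: measurableT_comp (f_meas n i) my.
  by rewrite f_unit.
have bg n : bounded_rvec (fun w => g (Enc n (xhat w))).
  apply: (bounded_rvec_norm2 1) => [i|w].
    exact: measurableT_comp (gEnc_meas n i) xhat_meas.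
  by rewrite gEnc_unit.
have bS := bounded_rv_ApproxErr f (bf _ x_meas) (bf _ xhat_meas).
have bA := bounded_rv_ApproxErr f (bf _ x_meas) (bf _ xbar_meas).
have bM := bounded_rv_MisREPA f Enc g (bf _ xhat_meas) bg.
have bR := bounded_rv_REPA f Enc g f_unit gEnc_unit (bf _ xbar_meas) bg.
apply: le_trans (le_Ex_affine P bR bS bA bM
  (fun w => REPA_le f Enc g (x w) _ _ hN f_unit gEnc_unit)) _.
have := MMD_DINOv2_le_Ex_ApproxErr P f (bf _ x_meas) (bf _ xhat_meas).
lra.
Qed.
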